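(* Every set star Lindelöf space of cardinality less than $\mathfrak b$ is set star Hurewicz, and every set strongly star Lindelöf space of cardinality less than $\mathfrak b$ is set strongly star Hurewicz.
   Context: For a family $\mathcal U$ of subsets of $X$ and $A\subseteq X$, $st(A,\mathcal U)=\bigcup\{U\in\mathcal U: U\cap A\neq\emptyset\}$. $X$ is set star Lindelöf (resp. set strongly star Lindelöf) if for every nonempty $A\subseteq X$ and every family $\mathcal U$ of open sets with $\overline A\subseteq\bigcup\mathcal U$ there is a countable $\mathcal V\subseteq\mathcal U$ with $A\subseteq st(\bigcup\mathcal V,\mathcal U)$ (resp. a countable $F\subseteq\overline A$ with $A\subseteq st(F,\mathcal U)$). $X$ is set star Hurewicz (resp. set strongly star Hurewicz) if for every nonempty $A\subseteq X$ and every sequence $(\mathcal U_n:n\in\omega)$ of families of open sets with $\overline A\subseteq\bigcup\mathcal U_n$ for all $n$ there are finite $\mathcal V_n\subseteq\mathcal U_n$ (resp. finite $F_n\subseteq\overline A$) such that each $x\in A$ lies in $st(\bigcup\mathcal V_n,\mathcal U_n)$ (resp. $st(F_n,\mathcal U_n)$) for all but finitely many $n$. $\mathfrak b$ is the minimal cardinality of a subset of $\omega^\omega$ unbounded with respect to $\leq^*$ ($f\leq^*g$ iff $f(n)\leq g(n)$ for all but finitely many $n$). *)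

From HB Require Import structures.
From mathcomp Require Import all_boot.
From mathcomp Require Import boolp classical_sets functions cardinality topology.
Set Implicit Arguments. Unset Strict Implicit. Unset Printing Implicit Defensive.
Local Open Scope classical_set_scope.
Local Open Scope card_scope.

Definition leq_star (f g : nat -> nat) : Prop :=
  exists m, forall n, (m <= n)%N -> (f n <= g n)%N.

Definition bounded_family (F : set (nat -> nat)) : Prop :=
  exists g : nat -> nat, forall f, F f -> leq_star f g.

(* |T| < b  iff  no unbounded family F ⊆ ω^ω has |F| <= |T|,
   i.e. every F ⊆ ω^ω with |F| <= |T| is <=*-bounded. *)
Definition card_lt_b (T : Type) : Prop :=
  forall F : set (nat -> nat), F #<= [set: T] -> bounded_family F.

Section Star.
Context {X : topologicalType}.

Definition st (A : set X) (U : set (set X)) : set X :=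
  \bigcup_(W in [set W | U W /\ W `&` A !=set0]) W.

Definition open_family (U : set (set X)) : Prop := forall W, U W -> open W.

Definition set_star_Lindelof : Prop :=
  forall (A : set X) (U : set (set X)), A !=set0 -> open_family U ->
    closure A `<=` \bigcup_(W in U) W ->
    exists V : set (set X), [/\ V `<=` U, countable V &
      A `<=` st (\bigcup_(W in V) W) U].

Definition set_strongly_star_Lindelof : Prop :=
  forall (A : set X) (U : set (set X)), A !=set0 -> open_family U ->
    closure A `<=` \bigcup_(W in U) W ->
    exists F : set X, [/\ F `<=` closure A, countable F & A `<=` st F U].

Definition set_star_Hurewicz : Prop :=
  forall (A : set X) (U : nat -> set (set X)), A !=set0 ->
    (forall n, open_family (U n)) ->
    (forall n, closure A `<=` \bigcup_(W in U n) W) ->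
    exists V : nat -> set (set X),
      (forall n, V n `<=` U n /\ finite_set (V n)) /\
      (forall x, A x -> exists m, forall n, (m <= n)%N ->
          st (\bigcup_(W in V n) W) (U n) x).

Definition set_strongly_star_Hurewicz : Prop :=
  forall (A : set X) (U : nat -> set (set X)), A !=set0 ->
    (forall n, open_family (U n)) ->
    (forall n, closure A `<=` \bigcup_(W in U n) W) ->
    exists F : nat -> set X,
      (forall n, F n `<=` closure A /\ finite_set (F n)) /\
      (forall x, A x -> exists m, forall n, (m <= n)%N -> st (F n) (U n) x).

End Star.
Arguments set_star_Lindelof : clear implicits.
Arguments set_strongly_star_Lindelof : clear implicits.
Arguments set_star_Hurewicz : clear implicits.
Arguments set_strongly_star_Hurewicz : clear implicits.

(** Under [|X| < b], a countable choice made for every point of [X] can be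
    truncated to a finite one: code the countably many candidates at stage [n]
    by natural numbers, record for each [x] and [n] the code of a candidate
    that works for [x]; fewer than [b] such functions are eventually dominated
    by a single [g], and the finitely many candidates of code at most [g n]
    work at stage [n] for every [x] from some point on.  The candidates are
    the members [Z] of the countable [V] (resp. the points [y] of the countable
    [F]) given by the Lindelof property, because the star of a union is the
    union of the stars: [st(\bigcup V, U)] is the union of the [st(Z, U)] and
    [st(F, U)] the union of the [st({y}, U)]. *)
From mathcomp Require Import all_boot.
From mathcomp Require Import boolp classical_sets functions cardinality topology.
Local Open Scope classical_set_scope.

Lemma card_lt_b_dominating {T : Type} (h : T -> nat -> nat) :
  card_lt_b T -> exists g : nat -> nat, forall x, leq_star (h x) g.
Proof.
move=> ltb; have [g hg] := ltb (range h) (card_image_le h setT).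
by exists g => x; apply: hg; exists x.
Qed.

Lemma card_lt_b_finite_subcovers {T I : Type} {A : set T} {C : nat -> set I}
    {P : nat -> I -> set T} :
  card_lt_b T -> (forall n, countable (C n)) ->
  (forall n, A `<=` \bigcup_(i in C n) P n i) ->
  exists D : nat -> set I,
    (forall n, D n `<=` C n /\ finite_set (D n)) /\
    (forall x, A x -> exists m, forall n, (m <= n)%N ->
       (\bigcup_(i in D n) P n i) x).
Proof.
move=> ltb countC AC.
have /choice[code code_inj] : forall n, exists f : I -> nat, {in C n &, injective f}.
  by move=> n; apply/countable_injP.
have /choice[h hP] : forall x, exists k : nat -> nat, A x -> forall n,
    exists2 i, C n i /\ P n i x & code n i = k n.
  move=> x; have [Ax|nAx] := pselect (A x); last by exists (fun=> 0%N) => /nAx.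
  have /choice[k kP] : forall n, exists k, exists2 i, C n i /\ P n i x & code n i = k.
    by move=> n; have [i Ci Pi] := AC n x Ax; exists (code n i); exists i.
  by exists k.
have [g dom_g] := card_lt_b_dominating h ltb.
exists (fun n => [set i | C n i /\ (code n i <= g n)%N]); split.
  move=> n; split=> [i []//|].
  have code_injD : {in [set i | C n i /\ (code n i <= g n)%N] &, injective (code n)}.
    by move=> i j; rewrite !inE => -[Ci _] [Cj _]; apply: code_inj; rewrite inE.
  rewrite -(eq_finite_set (inj_card_eq code_injD)).
  apply: (sub_finite_set _ (finite_II (g n).+1)).
  by move=> _ [i [_ le_ig] <-]; rewrite /= ltnS.
move=> x Ax; have [m le_m] := dom_g x; exists m => n /le_m le_hg.
have [i [Ci Pi] code_i] := hP x Ax n.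
by exists i => //; split=> //; rewrite code_i.
Qed.

Section StarOfUnion.
Context {X : topologicalType}.

Lemma st_bigcup (I : Type) (D : set I) (S : I -> set X) (U : set (set X)) :
  st (\bigcup_(i in D) S i) U = \bigcup_(i in D) st (S i) U.
Proof.
apply/seteqP; split=> x.
  move=> [W [UW [y [Wy [i Di Siy]]]] Wx].
  by exists i => //; exists W => //; split=> //; exists y.
move=> [i Di [W [UW [y [Wy Siy]]] Wx]].
by exists W => //; split=> //; exists y; split=> //; exists i.
Qed.

Lemma st_points (F : set X) (U : set (set X)) :
  st F U = \bigcup_(y in F) st [set y] U.
Proof. by rewrite -st_bigcup bigcup_imset1 image_id. Qed.

End StarOfUnion.

Lemma set_star_Hurewicz_of_Lindelof (X : topologicalType) :
  card_lt_b X -> set_star_Lindelof X -> set_star_Hurewicz X.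
Proof.
move=> ltb sL A U A0 U_open U_cov.
have /choice[V VP] := fun n => sL A (U n) A0 (U_open n) (U_cov n).
have countV n : countable (V n) by case: (VP n).
have coverV n : A `<=` \bigcup_(Z in V n) st Z (U n).
  by case: (VP n) => _ _; rewrite st_bigcup.
have [D [DV D_cov]] := card_lt_b_finite_subcovers ltb countV coverV.
exists D; split=> [n|x /D_cov[m Dm]].
  by have [DVn Dfin] := DV n; case: (VP n) => VU _ _; split=> // Z /DVn/VU.
by exists m => n /Dm; rewrite st_bigcup.
Qed.

Lemma set_strongly_star_Hurewicz_of_Lindelof (X : topologicalType) :
  card_lt_b X -> set_strongly_star_Lindelof X -> set_strongly_star_Hurewicz X.
Proof.
move=> ltb sL A U A0 U_open U_cov.
have /choice[F FP] := fun n => sL A (U n) A0 (U_open n) (U_cov n).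
have countF n : countable (F n) by case: (FP n).
have coverF n : A `<=` \bigcup_(y in F n) st [set y] (U n).
  by case: (FP n) => _ _; rewrite st_points.
have [D [DF D_cov]] := card_lt_b_finite_subcovers ltb countF coverF.
exists D; split=> [n|x /D_cov[m Dm]].
  by have [DFn Dfin] := DF n; case: (FP n) => FA _ _; split=> // y /DFn/FA.
by exists m => n /Dm; rewrite st_points.
Qed.

Theorem proposition4p3 (X : topologicalType) :
  card_lt_b X ->
  (set_star_Lindelof X -> set_star_Hurewicz X) /\
  (set_strongly_star_Lindelof X -> set_strongly_star_Hurewicz X).
Proof.
move=> ltb; split.
- exact: set_star_Hurewicz_of_Lindelof.
- exact: set_strongly_star_Hurewicz_of_Lindelof.
Qed.
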